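(* Let $\sigma$, $\nu$, $\alpha$ and $c$ be as in the second-order ergodic theorem for admissible substitutions (see context). Then for every $b\in\mathcal B$ and $\nu$-a.e. $x=(x_k)_{k\in\mathbb Z}\in X_\sigma$, $$\lim_{n\to\infty}\frac1{\log n}\sum_{1\le k\le n,\ x_k=b}\frac1{k^\alpha}=\alpha\cdot c\cdot\nu([b]).$$
   Context: $\mathcal A=\{1,\dots,N\}$, $\sigma:\mathcal A\to\mathcal A^+$ a substitution; $X_\sigma=\{x\in\mathcal A^{\mathbb Z}:x[-n,n]$ is a subword of some $\sigma^m(a)$, $m\ge1$, for all $n\ge 1\}$ with left shift $S$; $[b]=\{x:x_0=b\}$. $M_\sigma$ has $(a,b)$ entry the number of occurrences of $a$ in $\sigma(b)$. $\sigma$ is admissible if $M_\sigma=\begin{pmatrix}A&C\\0&B\end{pmatrix}$ (suitable ordering) with $A,B$ primitive, $C\ne0$, $\rho(A)>\rho(B)>1$, and, with $\mathcal B$ the letters indexing $B$: each $\sigma(b)$, $b\in\mathcal B$, begins and ends with a letter of $\mathcal B$, and for each $b\in\mathcal B$ some $\sigma^k(b)$ has a letter of $\mathcal B$ at a position other than first and last. $\nu$ is the unique (up to scaling) $\sigma$-finite infinite $S$-invariant measure on $X_\sigma$ with $0<\nu([b])<\infty$ for $b\in\mathcal B$, normalized by $\sum_{b\in\mathcal B}\xi_b\nu([b])=1$, where $\xi_i>0$ satisfy $|\sigma^k(i)|/(\xi_i\rho(A)^k)\to1$. $\alpha=\log\rho(B)/\log\rho(A)$, and $c>0$ is the constant of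 the second-order ergodic theorem: for every $f\in L^1(X_\sigma,\nu)$ and $\nu$-a.e. $x$, $\lim_{n\to\infty}\frac1{\log n}\sum_{k=1}^n\frac{\sum_{i=0}^{k-1}f(S^ix)}{c\,k^{\alpha+1}}=\int f\,d\nu$ (explicitly, $c=\gamma\delta$ with $\delta$ the a.e. value of the right average $\alpha$-dimensional density of $\mathcal H^\alpha$ on the graph-directed sets $K_b$ of the associated tile substitution and $\gamma^{-1}=\sum_{b\in\mathcal B}\nu([b])\mathcal H^\alpha(K_b)$). *)

From HB Require Import structures.
From mathcomp Require Import all_boot all_order all_algebra.
From mathcomp Require Import all_classical all_reals all_analysis.
From mathcomp Require Import complex.
Set Implicit Arguments. Unset Strict Implicit. Unset Printing Implicit Defensive.
Import Order.TTheory GRing.Theory Num.Theory numFieldNormedType.Exports.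
Local Open Scope ring_scope.
Local Open Scope classical_set_scope.

(** Alphabet: the letters are 'I_n.+1 (so N = n+1 letters, 0-indexed). *)

Definition subst_word (N : nat) (sigma : 'I_N -> seq 'I_N) (w : seq 'I_N) :
  seq 'I_N := flatten (map sigma w).

Definition subst_iter (N : nat) (sigma : 'I_N -> seq 'I_N) (k : nat)
  (w : seq 'I_N) : seq 'I_N := iter k (subst_word sigma) w.

Definition subst_matrix (N : nat) (sigma : 'I_N -> seq 'I_N) : 'M[nat]_N :=
  \matrix_(a, b) count_mem a (sigma b).

(** Principal block of M indexed by the letter set S (entries outside S x S
    are set to 0; its powers restricted to S are the powers of the block,
    and its nonzero spectrum is that of the block). *)
Definition restr_mx (N : nat) (S : {set 'I_N}) (M : 'M[nat]_N) : 'M[nat]_N :=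
  \matrix_(i, j) if (i \in S) && (j \in S) then M i j else 0%N.

Definition mxpow (N : nat) (M : 'M[nat]_N) (k : nat) : 'M[nat]_N :=
  iter k (mulmx M) 1%:M.

Definition primitive_on (N : nat) (S : {set 'I_N}) (M : 'M[nat]_N) : Prop :=
  exists k : nat, (0 < k)%N /\
    forall i j, i \in S -> j \in S -> (0 < mxpow (restr_mx S M) k i j)%N.

(** Spectral radius: largest modulus of a complex eigenvalue (a complex root
    of the characteristic polynomial); 0 for the empty matrix. *)
Definition spectral_radius (R : realType) (N : nat) (M : 'M[nat]_N) : R :=
  sup [set complex.ComplexField.Normc.normc z | z in
        [set z : complex.complex R |
           root (char_poly (map_mx (fun k : nat => k%:R : complex.complex R) M)) z]].

Definition rhoA (R : realType) (N : nat) (sigma : 'I_N -> seq 'I_N)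
  (Bset : {set 'I_N}) : R := spectral_radius R (restr_mx (~: Bset) (subst_matrix sigma)).
Definition rhoB (R : realType) (N : nat) (sigma : 'I_N -> seq 'I_N)
  (Bset : {set 'I_N}) : R := spectral_radius R (restr_mx Bset (subst_matrix sigma)).

Definition admissible (R : realType) (N : nat) (sigma : 'I_N -> seq 'I_N)
  (Bset : {set 'I_N}) : Prop :=
  let M := subst_matrix sigma in
  [/\
      forall a, sigma a != [::],
      (* lower-left block is zero *)
      forall a b, a \notin Bset -> b \in Bset -> M b a = 0%N,
      primitive_on (~: Bset) M /\ primitive_on Bset M &
      exists a b, [/\ a \notin Bset, b \in Bset & (0 < M a b)%N]] /\
  [/\
      1 < rhoB R sigma Bset < rhoA R sigma Bset,
      forall b, b \in Bset -> head b (sigma b) \in Bset /\ last b (sigma b) \in Bset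
    &
      forall b, b \in Bset -> exists k i,
        let w := subst_iter sigma k [:: b] in
        [/\ (0 < i)%N, (i < (size w).-1)%N & nth b w i \in Bset]].

Definition seqZ (n : nat) := int -> 'I_n.+1.
HB.instance Definition _ n := Choice.on (seqZ n).
HB.instance Definition _ n := isPointed.Build (seqZ n) (fun _ => ord0).
Definition cyls n : set (set (seqZ n)) :=
  [set A | exists i a, A = [set x : int -> 'I_n.+1 | x i = a]].
Definition shiftspace n := g_sigma_algebraType (@cyls n).

Definition Sshift n (x : shiftspace n) : shiftspace n :=
  fun i : int => (x : int -> 'I_n.+1) (i + 1).

Definition cyl0 n (b : 'I_n.+1) : set (shiftspace n) :=
  [set x | (x : int -> 'I_n.+1) 0 = b].

Definition central_word n (x : int -> 'I_n.+1) (m : nat) : seq 'I_n.+1 :=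
  [seq x (i%:Z - m%:Z) | i <- iota 0 (2 * m).+1].

Definition Xsigma n (sigma : 'I_n.+1 -> seq 'I_n.+1) : set (shiftspace n) :=
  [set x | forall m : nat, (0 < m)%N ->
     exists (k : nat) (a : 'I_n.+1), (0 < k)%N /\
       infix (central_word (x : int -> 'I_n.+1) m) (subst_iter sigma k [:: a])].

(* Feed the indicator of [b] to the second-order ergodic theorem: with
   a_k = 1_{x_k = b} and S_k = a_0 + ... + a_{k-1} it gives
   (1/log N) sum_{k <= N} S_k k^(-alpha-1) --> c nu([b]).  Abel summation writes
   sum_{k <= N} a_k k^(-alpha) as sum_k S_k (k^(-alpha) - (k+1)^(-alpha)) plus the
   boundary term S_(N+1) (N+1)^(-alpha).  By Bernoulli's inequality the differences
   lie between alpha (k+1)^(-alpha-1) and alpha k^(-alpha-1), which makes the main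
   part alpha sum_k S_k k^(-alpha-1) + O(1).  Since S is nondecreasing, the boundary
   term is at most 2^(alpha+1) sum_{N < k <= 2N+1} S_k k^(-alpha-1), which is
   o(log N) because log(2N+1) ~ log N. *)

From HB Require Import structures.
From mathcomp Require Import all_boot all_order all_algebra.
From mathcomp Require Import all_classical all_reals all_analysis.
From mathcomp Require Import ring lra measurable_realfun.
Set Implicit Arguments. Unset Strict Implicit. Unset Printing Implicit Defensive.
Import Order.TTheory GRing.Theory Num.Theory numFieldNormedType.Exports.
Local Open Scope ring_scope.
Local Open Scope classical_set_scope.

Lemma powR_bernoulli (R : realType) (a y : R) : 0 <= a <= 1 -> -1 < y ->
  (1 + y) `^ a <= 1 + a * y.
Proof.
move=> /andP[a0 a1] y1; have y0 : 0 < 1 + y by lra.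
have ay0 : 0 < 1 + a * y.
  have [a_gt0|a_le0] := ltP 0 a; first by have := mulr_gt0 a_gt0 y0; lra.
  have -> : a = 0 by lra.
  by rewrite mul0r addr0.
have := @concave_ln R (Itv01 a0 a1) (1 + y) 1 y0 ltr01.
rewrite !convRE /= ln1 mulr0 addr0.
have -> : a * (1 + y) + unstable.onem a * 1 = 1 + a * y.
  by rewrite /unstable.onem; ring.
by move=> h; rewrite /powR gt_eqF // -ler_ln ?posrE ?expR_gt0 // expRK.
Qed.

Lemma subr1_invr_le (R : realFieldType) (r : R) : 0 < r -> 1 - r^-1 <= r - 1.
Proof.
move=> r0; have ri0 : 0 < r^-1 by rewrite invr_gt0.
have rri : r * r^-1 = 1 by rewrite divff // gt_eqF.
have := mulr_ge0 (sqr_ge0 (r - 1)) (ltW ri0); nra.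
Qed.

Lemma powRD1 (R : realType) (x a : R) : 0 < x -> x `^ (a + 1) = x `^ a * x.
Proof.
by move=> x0; rewrite powRD ?powRr1 ?(ltW x0) //; apply/implyP => _; rewrite gt_eqF.
Qed.

Lemma invpowR_sub_le (R : realType) (a x : R) : 0 <= a <= 1 -> 0 < x ->
  (x `^ a)^-1 - ((x + 1) `^ a)^-1 <= a * (x `^ (a + 1))^-1.
Proof.
move=> a01 x0.
have xi0 : 0 < x^-1 by rewrite invr_gt0.
have -> : x + 1 = x * (1 + x^-1) by rewrite mulrDr mulr1 divff // gt_eqF.
rewrite powRM ?(ltW x0) ?addr_ge0 ?(ltW xi0) // powRD1 //.
set p := x `^ a; set r := (1 + x^-1) `^ a.
have p0 : 0 < p by exact: powR_gt0.
have r0 : 0 < r by apply: powR_gt0; lra.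
have r_le : r <= 1 + a * x^-1 by apply: powR_bernoulli => //; lra.
have := subr1_invr_le r0; have := invr_gt0 p; rewrite p0 !invfM => pi0 h.
have : p^-1 * (1 - r^-1) <= p^-1 * (a * x^-1) by rewrite ler_pM2l //; lra.
by rewrite mulrBr mulr1 [a * (_ * _)]mulrCA.
Qed.

Lemma invpowR_sub_ge (R : realType) (a x : R) : 0 <= a <= 1 -> 0 < x ->
  a * ((x + 1) `^ (a + 1))^-1 <= (x `^ a)^-1 - ((x + 1) `^ a)^-1.
Proof.
move=> a01 x0.
have y0 : 0 < x + 1 by lra.
have yi1 : (x + 1)^-1 < 1 by rewrite invf_lt1 //; lra.
have yi0 : 0 < (x + 1)^-1 by rewrite invr_gt0.
have -> : x `^ a = (x + 1) `^ a * (1 - (x + 1)^-1) `^ a.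
  rewrite -powRM ?(ltW y0) ?subr_ge0 ?(ltW yi1) //.
  by rewrite mulrBr mulr1 divff ?gt_eqF // addrK.
rewrite powRD1 //.
set q := (x + 1) `^ a; set s := (1 - (x + 1)^-1) `^ a.
have q0 : 0 < q by exact: powR_gt0.
have s0 : 0 < s by apply: powR_gt0; lra.
have s_le : s <= 1 - a * (x + 1)^-1.
  by rewrite -mulrN; apply: powR_bernoulli => //; lra.
have si0 : 0 < s^-1 by rewrite invr_gt0.
have := subr1_invr_le si0; rewrite invrK.
have := invr_gt0 q; rewrite q0 !invfM => qi0 h.
have : q^-1 * (a * (x + 1)^-1) <= q^-1 * (s^-1 - 1) by rewrite ler_pM2l //; lra.
by rewrite mulrBr mulr1 [a * (_ * _)]mulrCA.
Qed.

Section LogAsymptotics.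
Variable R : realType.

Lemma cvg_invr_ln : (ln (N%:R : R))^-1 @[N --> \oo] --> (0 : R).
Proof.
apply/cvgr0Pnorm_lt => e e0; near=> N.
have hN : expR e^-1 < N%:R by near: N; apply: nbhs_infty_gtr.
have N0 : (0 : R) < N%:R by apply: lt_trans hN; exact: expR_gt0.
have hl : e^-1 < ln N%:R by rewrite -ltr_expR lnK.
have l0 : 0 < ln (N%:R : R) by apply: lt_trans hl; rewrite invr_gt0.
by rewrite gtr0_norm ?invr_gt0 // -(ltf_pV2 (x := _)) ?posrE ?invr_gt0 // invrK.
Unshelve. all: end_near. Qed.

Lemma cvg_ln_odd_ratio :
  ln ((N.*2.+1)%:R : R) / ln (N%:R : R) @[N --> \oo] --> (1 : R).
Proof.
have h3 : 1 + ln (3 : R) * (ln (N%:R : R))^-1 @[N --> \oo] --> (1 : R).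
  rewrite -[X in _ --> X]addr0 -(mulr0 (ln (3 : R))).
  by apply: cvgD; [exact: cvg_cst | exact: cvgMl_tmp cvg_invr_ln].
apply: (squeeze_cvgr _ (cvg_cst (1 : R)) h3); near=> N.
have N2 : (2 : R) <= N%:R by near: N; apply: nbhs_infty_ger.
have N0 : (0 : R) < N%:R by lra.
have l0 : 0 < ln (N%:R : R) by apply: ln_gt0; lra.
have lo : ln (N%:R : R) <= ln (N.*2.+1)%:R.
  by rewrite ler_ln ?posrE ?N0 ?ltr0n // ler_nat -addnn ltnW // ltnS leq_addr.
have hi : ln ((N.*2.+1)%:R : R) <= ln 3 + ln N%:R.
  rewrite -lnM ?posrE ?N0 // ler_ln ?posrE ?ltr0n ?mulr_gt0 ?N0 //.
  by rewrite -addnn -addn1 !natrD; lra.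
rewrite ler_pdivlMr // mul1r lo /= ler_pdivrMr // mulrDl mul1r.
by rewrite -mulrA mulVf ?gt_eqF // mulr1 addrC.
Unshelve. all: end_near. Qed.

Lemma cvg_ln_odd (u : nat -> R) (l : R) :
  (ln (N%:R : R))^-1 * u N @[N --> \oo] --> l ->
  (ln (N%:R : R))^-1 * u N.*2.+1 @[N --> \oo] --> l.
Proof.
move=> ul; have odd_cvgy : (fun N => N.*2.+1) @ \oo --> \oo.
  apply/cvgnyPge => A; exists A => // N /= AN.
  by apply: leq_trans AN _; rewrite -addnn -addnS leq_addr.
rewrite -[l]mulr1; apply: cvg_trans (cvgM (cvg_comp _ _ odd_cvgy ul) cvg_ln_odd_ratio).
apply: near_eq_cvg; near=> N.
have N1 : (1 < N)%N by near: N; exists 2%N.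
have l1 : 0 < ln (N%:R : R) by apply: ln_gt0; rewrite ltr1n.
have l2 : 0 < ln ((N.*2.+1)%:R : R).
  by apply: ln_gt0; rewrite ltr1n ltnS double_gt0 ltnW.
by rewrite /=; field; rewrite !gt_eqF.
Unshelve. all: end_near. Qed.

End LogAsymptotics.

Section AbelSummation.
Variables (R : realType) (alpha : R).
Hypothesis alpha01 : 0 < alpha <= 1.
Variable a : nat -> R.
Hypothesis a01 : forall k, 0 <= a k <= 1.

Definition inv_pow (k : nat) : R := (k%:R `^ alpha)^-1.
Definition inv_powS (k : nat) : R := (k%:R `^ (alpha + 1))^-1.
Definition partial_sum (k : nat) : R := \sum_(0 <= i < k) a i.
Definition weighted_sum (N : nat) : R := \sum_(1 <= k < N.+1) a k * inv_pow k.
Definition smoothed_sum (N : nat) : R :=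
  \sum_(1 <= k < N.+1) partial_sum k * inv_powS k.

Lemma partial_sumS k : partial_sum k.+1 = partial_sum k + a k.
Proof. by rewrite /partial_sum big_nat_recr. Qed.

Lemma partial_sum_ge0_le k : 0 <= partial_sum k <= k%:R.
Proof.
elim: k => [|k IH]; first by rewrite /partial_sum big_geq // lexx.
by rewrite partial_sumS -natr1; have := a01 k; lra.
Qed.

Lemma partial_sum_le : {homo partial_sum : m n / (m <= n)%N >-> m <= n}.
Proof.
move=> m n /subnK <-; elim: (n - m)%N => [|d IH]; first by rewrite add0n.
by rewrite addSn partial_sumS; have := a01 (d + m)%N; lra.
Qed.

Lemma inv_pow_ge0 k : 0 <= inv_pow k.
Proof. by rewrite invr_ge0 powR_ge0. Qed.

Lemma inv_powS_ge0 k : 0 <= inv_powS k.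
Proof. by rewrite invr_ge0 powR_ge0. Qed.

Lemma inv_pow1 : inv_pow 1 = 1.
Proof. by rewrite /inv_pow powR1 invr1. Qed.

Lemma natr_mul_inv_powS k : (0 < k)%N -> k%:R * inv_powS k = inv_pow k.
Proof.
move=> k0; have k0R : (0 : R) < k%:R by rewrite ltr0n.
by rewrite /inv_powS powRD1 // invfM mulrCA mulfV ?gt_eqF ?mulr1.
Qed.

Lemma inv_pow_sub k : (0 < k)%N ->
  alpha * inv_powS k.+1 <= inv_pow k - inv_pow k.+1 <= alpha * inv_powS k.
Proof.
move=> k0; have k0R : (0 : R) < k%:R by rewrite ltr0n.
have alpha_itv : 0 <= alpha <= 1 by case/andP: alpha01 => /ltW -> ->.
rewrite /inv_pow /inv_powS -natr1.
by rewrite invpowR_sub_ge // invpowR_sub_le.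
Qed.

Lemma inv_powS_le m n : (0 < m)%N -> (m <= n)%N -> inv_powS n <= inv_powS m.
Proof.
move=> m0 mn; have n0 : (0 < n)%N := leq_trans m0 mn.
rewrite /inv_powS lef_pV2 ?posrE ?powR_gt0 ?ltr0n //.
have /andP[al0 _] := alpha01.
by apply: ge0_ler_powR; rewrite ?nnegrE ?ler0n ?ler_nat // addr_ge0 // ltW.
Qed.

Lemma inv_powS_double N : inv_powS N.*2.+2 = (2 `^ (alpha + 1))^-1 * inv_powS N.+1.
Proof. by rewrite /inv_powS -invfM -powRM ?ler0n // -natrM mul2n doubleS. Qed.

Lemma abel_summation_step k : (0 < k)%N ->
  `|a k * (inv_pow k - inv_pow k.+1)
    + partial_sum k * (inv_pow k - inv_pow k.+1 - alpha * inv_powS k)|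
  <= (alpha + 2) * (inv_pow k - inv_pow k.+1).
Proof.
move=> k0; have /andP[al0 _] := alpha01.
have /andP[lo up] := inv_pow_sub k0.
have /andP[S0 Sk] := partial_sum_ge0_le k.
have /andP[a0 a1] := a01 k.
have h0 := inv_powS_ge0 k.+1.
have h_le := inv_powS_le k0 (leqnSn k).
set d := inv_pow k - inv_pow k.+1 in lo up *.
have kh : k%:R * (inv_powS k - inv_powS k.+1) = d + inv_powS k.+1.
  rewrite mulrBr natr_mul_inv_powS // -[k%:R](addrK 1) natr1 mulrBl.
  by rewrite natr_mul_inv_powS // mul1r /d; ring.
have d0 : 0 <= d by have := mulr_ge0 (ltW al0) h0; lra.
have ad : 0 <= a k * d <= d by rewrite mulr_ge0 //= ler_piMl.
have Sneg : partial_sum k * (d - alpha * inv_powS k) <= 0.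
  by rewrite -oppr_ge0 -mulrN mulr_ge0 //; lra.
have Sbig : - (alpha * (d + inv_powS k.+1)) <= partial_sum k * (d - alpha * inv_powS k).
  rewrite -kh mulrCA -mulrN.
  have : 0 <= partial_sum k * (d - alpha * inv_powS k + alpha * (inv_powS k - inv_powS k.+1)).
    by apply: mulr_ge0 => //; lra.
  have : partial_sum k * (alpha * (inv_powS k - inv_powS k.+1))
         <= k%:R * (alpha * (inv_powS k - inv_powS k.+1)).
    by apply: ler_wpM2r => //; apply: mulr_ge0; [exact: ltW | lra].
  nra.
by rewrite ler_norml; apply/andP; split; nra.
Qed.

Lemma abel_summation_error N :
  `|weighted_sum N - alpha * smoothed_sum N - partial_sum N.+1 * inv_pow N.+1 + a 0|
  <= (alpha + 2) * (1 - inv_pow N.+1).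
Proof.
elim: N => [|N IH].
  rewrite /weighted_sum /smoothed_sum !big_geq // partial_sumS /partial_sum big_geq //.
  rewrite inv_pow1.
  have -> : 0 - alpha * 0 - (0 + a 0) * 1 + a 0 = 0 by ring.
  by rewrite normr0 subrr mulr0.
have -> : weighted_sum N.+1 - alpha * smoothed_sum N.+1
          - partial_sum N.+2 * inv_pow N.+2 + a 0
        = (weighted_sum N - alpha * smoothed_sum N - partial_sum N.+1 * inv_pow N.+1 + a 0)
          + (a N.+1 * (inv_pow N.+1 - inv_pow N.+2)
             + partial_sum N.+1 * (inv_pow N.+1 - inv_pow N.+2 - alpha * inv_powS N.+1)).
  rewrite /weighted_sum /smoothed_sum !(big_nat_recr N.+1) // (partial_sumS N.+1) /=.
  ring.
apply: le_trans (ler_normD _ _) _.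
by have := abel_summation_step (ltn0Sn N); lra.
Qed.

Lemma boundary_term_le N :
  partial_sum N.+1 * inv_pow N.+1
  <= 2 `^ (alpha + 1) * (smoothed_sum N.*2.+1 - smoothed_sum N).
Proof.
have -> : smoothed_sum N.*2.+1 - smoothed_sum N
          = \sum_(N.+1 <= k < N.*2.+2) partial_sum k * inv_powS k.
  rewrite /smoothed_sum (@big_cat_nat _ _ _ N.+1 1 N.*2.+2) //=.
    by rewrite addrAC subrr add0r.
  by rewrite ltnS -addnn; apply/leqW/leq_addr.
have p2 : 0 < 2 `^ (alpha + 1) :> R by exact: powR_gt0.
rewrite -ler_pdivrMl //.
have : \sum_(N.+1 <= k < N.*2.+2) partial_sum N.+1 * inv_powS N.*2.+2
       <= \sum_(N.+1 <= k < N.*2.+2) partial_sum k * inv_powS k.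
  apply: ler_sum_nat => k /andP[k1 k2].
  have /andP[S0 _] := partial_sum_ge0_le N.+1.
  apply: ler_pM => //; [exact: inv_powS_ge0 | exact: partial_sum_le | ].
  by apply: inv_powS_le; [exact: leq_ltn_trans k1 | exact: ltnW].
apply: le_trans; rewrite sumr_const_nat inv_powS_double.
have -> : (N.*2.+2 - N.+1)%N = N.+1 by rewrite -addnn -addSn -addnS addnK.
rewrite -(natr_mul_inv_powS (ltn0Sn N)) -mulr_natr le_eqVlt.
by apply/orP; left; apply/eqP; ring.
Qed.

Lemma weighted_sum_sub_smoothed_le N :
  `|weighted_sum N - alpha * smoothed_sum N|
  <= alpha + 3 + 2 `^ (alpha + 1) * (smoothed_sum N.*2.+1 - smoothed_sum N).
Proof.
have := abel_summation_error N; have := boundary_term_le N.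
have := inv_pow_ge0 N.+1; have /andP[a0 a1] := a01 0; have /andP[al0 _] := alpha01.
have /andP[S0 _] := partial_sum_ge0_le N.+1.
have := mulr_ge0 S0 (inv_pow_ge0 N.+1).
rewrite !ler_norml => Sg0 g0 bd /andP[lo up].
have : (alpha + 2) * (1 - inv_pow N.+1) <= alpha + 2.
  by rewrite ler_piMr ?gerBl //; lra.
lra.
Qed.

Lemma cvg_weighted_sum (l : R) :
  (ln (N%:R : R))^-1 * smoothed_sum N @[N --> \oo] --> l ->
  (ln (N%:R : R))^-1 * weighted_sum N @[N --> \oo] --> alpha * l.
Proof.
move=> smoothed_l.
pose err N := (ln (N%:R : R))^-1 * (weighted_sum N - alpha * smoothed_sum N).
pose bound N := (alpha + 3) * (ln (N%:R : R))^-1 + 2 `^ (alpha + 1) *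
  ((ln (N%:R : R))^-1 * smoothed_sum N.*2.+1 - (ln (N%:R : R))^-1 * smoothed_sum N).
have bound0 : bound N @[N --> \oo] --> 0.
  have -> : 0 = (alpha + 3) * 0 + 2 `^ (alpha + 1) * (l - l).
    by rewrite subrr !mulr0 addr0.
  apply: cvgD; first exact: cvgMl_tmp (@cvg_invr_ln R).
  by apply: cvgMl_tmp; apply: cvgB => //; exact: cvg_ln_odd.
have err0 : err N @[N --> \oo] --> 0.
  apply: (squeeze_cvgr (f := fun N => - bound N) (h := bound)); last exact: bound0.
    near=> N; have N1 : (1 < N)%N by near: N; exists 2%N.
    have li0 : 0 < (ln (N%:R : R))^-1 by rewrite invr_gt0 ln_gt0 // ltr1n.
    rewrite -ler_norml /err normrM gtr0_norm // /bound -!mulrBr.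
    rewrite [_ / _]mulrC [2 `^ _ * _]mulrCA -mulrDr ler_pM2l //.
    exact: weighted_sum_sub_smoothed_le.
  by rewrite -oppr0; exact: cvgN.
have -> : (fun N => (ln (N%:R : R))^-1 * weighted_sum N)
          = (fun N => alpha * ((ln (N%:R : R))^-1 * smoothed_sum N) + err N).
  by apply/funext => N; rewrite /err; ring.
by rewrite -[alpha * l]addr0; apply: cvgD => //; exact: cvgMl_tmp.
Unshelve. all: end_near. Qed.

Lemma cvg_weighted_sum_of_averages (c l : R) : 0 < c ->
  (ln (N%:R : R))^-1 *
    \sum_(1 <= k < N.+1) partial_sum k / (c * k%:R `^ (alpha + 1))
    @[N --> \oo] --> l ->
  (ln (N%:R : R))^-1 * weighted_sum N @[N --> \oo] --> alpha * c * l.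
Proof.
move=> c0 avg_l; rewrite -mulrA; apply: cvg_weighted_sum.
have -> : (fun N => (ln (N%:R : R))^-1 * smoothed_sum N) = (fun N => c *
    ((ln (N%:R : R))^-1 * \sum_(1 <= k < N.+1) partial_sum k / (c * k%:R `^ (alpha + 1)))).
  apply/funext => N; rewrite mulrCA; congr (_ * _).
  rewrite mulr_sumr; apply: eq_bigr => k _.
  by rewrite /inv_powS invfM mulrCA (mulrA c) mulfV ?gt_eqF // mul1r.
exact: cvgMl_tmp.
Qed.

End AbelSummation.

Lemma ln_div_ln_gt0_le1 (R : realType) (x y : R) : 1 < x -> x < y ->
  0 < ln x / ln y <= 1.
Proof.
move=> x1 xy; have y1 := lt_trans x1 xy.
have lx0 : 0 < ln x by exact: ln_gt0.
have lxy : ln x < ln y by rewrite ltr_ln ?posrE // (lt_trans ltr01).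
by rewrite divr_gt0 ?ln_gt0 //= ler_pdivrMr ?mul1r ?ltW ?ln_gt0.
Qed.

Lemma integrable_indic_lty d (T : measurableType d) (R : realType)
    (mu : {measure set T -> \bar R}) (A : set T) :
  measurable A -> (mu A < +oo)%E -> mu.-integrable setT (EFin \o \1_A).
Proof.
move=> mA muA; apply/integrableP; split.
  by apply/measurable_EFinP; exact: measurable_indic.
rewrite (eq_integral (fun x => (\1_A x)%:E)) ?integral_indic ?setIT //.
by move=> x _; rewrite /= ger0_norm.
Qed.

Lemma iter_Sshift n (x : shiftspace n) i (j : int) :
  (iter i (@Sshift n) x : int -> 'I_n.+1) j = (x : int -> 'I_n.+1) (j + i%:Z).
Proof.
elim: i j => [|i IH] j /=; first by rewrite addr0.
by rewrite /Sshift IH -addrA intS.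
Qed.

Lemma measurable_cyl0 n (b : 'I_n.+1) : measurable (cyl0 b).
Proof. by apply: sub_gen_smallest; exists 0, b. Qed.

Lemma indic_cyl0_iter (R : realType) n (b : 'I_n.+1) (x : shiftspace n) k :
  \1_(cyl0 b) (iter k (@Sshift n) x) = ((x : int -> 'I_n.+1) k%:Z == b)%:R :> R.
Proof.
rewrite indicE; suff -> : (iter k (@Sshift n) x \in cyl0 b) = (x k%:Z == b) by [].
apply/idP/eqP; first by move/set_mem; rewrite /cyl0 /= iter_Sshift add0r.
by move=> xkb; apply/mem_set; rewrite /cyl0 /= iter_Sshift add0r.
Qed.

Theorem mainTheorem12 (R : realType) (n : nat)
  (sigma : 'I_n.+1 -> seq 'I_n.+1) (Bset : {set 'I_n.+1})
  (nu : {measure set (shiftspace n) -> \bar R})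
  (xi : 'I_n.+1 -> R) (c : R) :
  admissible R sigma Bset ->
  (forall i, 0 < xi i) ->
  (forall i, ((size (subst_iter sigma k [:: i]))%:R
                             / (xi i * rhoA R sigma Bset ^+ k) : R) @[k --> \oo] --> (1 : R)) ->
  nu (~` Xsigma sigma) = 0%E ->
  sigma_finite setT nu ->
  nu setT = +oo%E ->
  (forall E, measurable E -> nu (@Sshift n @^-1` E) = nu E) ->
  (forall b, b \in Bset -> (0 < nu (cyl0 b))%E /\ (nu (cyl0 b) < +oo)%E) ->
  (\sum_(b in Bset) (xi b)%:E * nu (cyl0 b))%E = 1%E ->
  let alpha := ln (rhoB R sigma Bset) / ln (rhoA R sigma Bset) in
  0 < c ->
  (forall f : shiftspace n -> R, nu.-integrable setT (EFin \o f) ->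
     {ae nu, forall x,
        ((ln N%:R)^-1 *
           \sum_(1 <= k < N.+1)
              (\sum_(0 <= i < k) f (iter i (@Sshift n) x)) / (c * k%:R `^ (alpha + 1)) : R)
        @[N --> \oo] --> fine (\int[nu]_y (f y)%:E)}) ->
  forall b, b \in Bset ->
    {ae nu, forall x : shiftspace n,
       ((ln N%:R)^-1 *
          \sum_(1 <= k < N.+1 | (x : int -> 'I_n.+1) k%:Z == b) (k%:R `^ alpha)^-1 : R)
       @[N --> \oo] --> alpha * c * fine (nu (cyl0 b))}.
Proof.
move=> [_ [/andP[rhoB_gt1 rhoB_lt_rhoA] _ _]] _ _ _ _ _ _ nu_cyl0 _ alpha c0 ergodic b bB.
have alpha01 := ln_div_ln_gt0_le1 rhoB_gt1 rhoB_lt_rhoA.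
have mb := measurable_cyl0 b.
have [_ nub_fin] := nu_cyl0 b bB.
apply: filterS (ergodic _ (integrable_indic_lty mb nub_fin)) => x.
rewrite integral_indic // setIT => avg.
pose a k : R := \1_(cyl0 b) (iter k (@Sshift n) x).
have a01 k : 0 <= a k <= 1 by rewrite /a indicE; case: (_ \in _); rewrite ?lexx ?ler01.
suff -> : (fun N => (ln (N%:R : R))^-1 *
             \sum_(1 <= k < N.+1 | x k%:Z == b) (k%:R `^ alpha)^-1)
          = (fun N => (ln (N%:R : R))^-1 * weighted_sum alpha a N).
  by apply: (cvg_weighted_sum_of_averages alpha01 a01 c0); exact: avg.
apply/funext => N; rewrite /weighted_sum big_mkcond; congr (_ * _).
apply: eq_bigr => k _.
by rewrite /a indic_cyl0_iter; case: (_ == _); rewrite ?mul1r ?mul0r.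
Qed.
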